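(* Let $m$ be an even integer $\ge4$ and $l\ge m/2$. For any $u_1,\ldots,u_m\in V$, $$(\pi\otimes1_V^{\otimes m-4}\otimes\pi)(1_V^{\otimes m}\otimes C^{\otimes l})|u_1u_2\cdots u_m\omega_0^l| = (\pi\otimes1_V^{\otimes m-4}\otimes\pi)\Big((2g)^lu_1\cdots u_m+\big(l-\tfrac m2\big)(-1)^l\Phi_1(u)+(-1)^l\Phi_2(u)\Big),$$ where $\Phi_1(u)=(-1)^{\frac m2-1}\mathrm{Cont}(u_2\cdots u_{m-1})\,u_m\omega_0^{\frac m2-1}u_1$ and $$\Phi_2(u)=\sum_{\substack{1\le k\le m-1\\ k\text{ odd}}}(-1)^{\frac{k-1}2}\Big(\mathrm{Cont}(u_{m-k+1}\cdots u_{m-1})\,u_m\omega_0^{\frac{k-1}2}u_1u_2\cdots u_{m-k}+\mathrm{Cont}(u_2\cdots u_k)\,u_{k+1}\cdots u_m\omega_0^{\frac{k-1}2}u_1\Big).$$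
   Context: $\mathbb{K}$ is a field of characteristic zero and $V$ a symplectic $\mathbb{K}$-vector space of dimension $2g$ with symplectic basis $a_1,\ldots,a_g,b_1,\ldots,b_g$; $\omega_0=\sum_i(a_i\otimes b_i-b_i\otimes a_i)\in V^{\otimes 2}$. $C\colon V^{\otimes2}\to\mathbb{K}$ is bilinear with $C(a_i\otimes b_j)=\delta_{ij}$, $C(b_i\otimes a_j)=-\delta_{ij}$, $C(a_i\otimes a_j)=C(b_i\otimes b_j)=0$ (so $C(\omega_0)=2g$); $Q=\ker C$ and $\pi\colon V^{\otimes2}\to Q$ is the projection along $V^{\otimes2}=Q\oplus\mathbb{K}\omega_0$. Products are taken in the tensor algebra $T(V)$. Here $|\cdot|$ is the cyclic symmetrization $|x_1\cdots x_N|=\sum_{k=0}^{N-1}\nu^k(x_1\cdots x_N)$ for $x_i\in V$, with $\nu(x_1x_2\cdots x_N)=x_2\cdots x_Nx_1$. $C^{\otimes l}$ is applied to the last $2l$ tensor factors in consecutive pairs. For $v_1,\ldots,v_{2r}\in V$, $\mathrm{Cont}(v_1\cdots v_{2r})=C(v_1\otimes v_2)\cdots C(v_{2r-1}\otimes v_{2r})$ (equal to $1$ for $r=0$). *)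

From mathcomp Require Import all_boot all_order all_algebra.
Set Implicit Arguments. Unset Strict Implicit. Unset Printing Implicit Defensive.
Import Order.TTheory GRing.Theory Num.Theory.
Local Open Scope ring_scope.

(* Symplectic space V = K^(2g) with basis e_0..e_(2g-1):
   e_i = a_(i+1) for i < g,  e_(g+i) = b_(i+1) for i < g. *)
Section Tensors.
Variables (K : fieldType) (g : nat).

Definition idx := 'I_(g.*2).

Definition Vec := idx -> K.

(* matrix of C on basis pairs: C(a_i b_j) = delta, C(b_i a_j) = -delta *)
Definition Cmat (i j : idx) : K :=
  if (i < g)%N && (nat_of_ord j == i + g)%N then 1
  else if (j < g)%N && (nat_of_ord i == j + g)%N then -1 else 0.

Definition Cbil (v w : Vec) : K := \sum_(i : idx) \sum_(j : idx) v i * w j * Cmat i j.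

(* Cont(v1 ... v2r) = C(v1 v2) ... C(v2r-1 v2r); (odd length never used) *)
Fixpoint Cont (s : seq Vec) : K :=
  match s with
  | [::] => 1
  | v :: w :: r => Cbil v w * Cont r
  | [:: _] => 0
  end.

Fixpoint Contw (s : seq idx) : K :=
  match s with
  | [::] => 1
  | i :: j :: r => Cmat i j * Contw r
  | [:: _] => 0
  end.

(* Elements of (the degree-wise completion of) T(V): coefficient functions on
   words in the basis indices; the word i1...iN stands for e_i1 ... e_iN. *)
Definition tensor := seq idx -> K.

Definition tadd (x y : tensor) : tensor := fun w => x w + y w.
Definition tscale (c : K) (x : tensor) : tensor := fun w => c * x w.
Definition tone : tensor := fun w => (w == [::])%:R.
Definition tmul (x y : tensor) : tensor :=
  fun w => \sum_(k < (size w).+1) x (take k w) * y (drop k w).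
Definition texp (x : tensor) (n : nat) : tensor := iter n (tmul x) tone.

Definition vtens (v : Vec) : tensor :=
  fun w => if w is [:: i] then v i else 0.

Definition vprod (s : seq Vec) : tensor := foldr (fun v acc => tmul (vtens v) acc) tone s.

(* omega_0 = sum_i (a_i b_i - b_i a_i) *)
Definition omega0 : tensor :=
  fun w => if w is [:: i; j] then Cmat i j else 0.

(* cyclic symmetrization, degreewise: |x| = sum_{k<N} nu^k x on V^{(x)N},
   nu(x1 x2 ... xN) = x2 ... xN x1; the coefficient of the word w in nu^k x
   is the coefficient of rotr k w in x. *)
Definition cyc (x : tensor) : tensor :=
  fun w => \sum_(k < size w) x (rotr k w).

(* 1_V^{(x)m} (x) C^{(x)l} : V^{(x)(m+2l)} -> V^{(x)m} *)
Definition contract (m l : nat) (x : tensor) : tensor :=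
  fun w => if size w == m then
             \sum_(u : (l.*2).-tuple idx) x (w ++ u) * Contw u
           else 0.

(* pi : V^{(x)2} -> Q = ker C, projection along K omega0:
   pi(x) = x - (C(x)/(2g)) omega0 ; applied to the first / last two factors *)
Definition piFirst (x : tensor) : tensor :=
  fun w => match w with
           | i1 :: i2 :: r =>
               x w - Cmat i1 i2 / (g.*2)%:R *
                     \sum_(a : idx) \sum_(b : idx) Cmat a b * x (a :: b :: r)
           | _ => x w
           end.

Definition piLast (x : tensor) : tensor :=
  fun w => match rev w with
           | j2 :: j1 :: r =>
               x w - Cmat j1 j2 / (g.*2)%:R *
                     \sum_(a : idx) \sum_(b : idx) Cmat a b * x (rev r ++ [:: a; b])
           | _ => x w
           end.

(* pi (x) 1_V^{(x)(m-4)} (x) pi on V^{(x)m} (m >= 4), extended by 0 off degree m *)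
Definition piPi (m : nat) (x : tensor) : tensor :=
  fun w => if size w == m then piLast (piFirst x) w else 0.

(* u_a u_(a+1) ... u_b (empty if b < a) *)
Definition useq (u : nat -> Vec) (a b : nat) : seq Vec :=
  [seq u i | i <- iota a (b.+1 - a)].

Definition lhs54 (m l : nat) (u : nat -> Vec) : tensor :=
  piPi m (contract m l (cyc (tmul (vprod (useq u 1 m)) (texp omega0 l)))).

Definition Phi1 (m : nat) (u : nat -> Vec) : tensor :=
  tscale ((-1) ^+ (m./2 - 1) * Cont (useq u 2 (m - 1)))
         (tmul (vtens (u m)) (tmul (texp omega0 (m./2 - 1)) (vtens (u 1%N)))).

Definition Phi2 (m : nat) (u : nat -> Vec) : tensor :=
  fun w => \sum_(1 <= k < m | odd k)
    ((-1) ^+ (k.-1./2) *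
     (Cont (useq u (m - k + 1) (m - 1)) *
        tmul (vtens (u m)) (tmul (texp omega0 (k.-1./2)) (vprod (useq u 1 (m - k)))) w
      + Cont (useq u 2 k) *
        tmul (vprod (useq u k.+1 m)) (tmul (texp omega0 (k.-1./2)) (vtens (u 1%N))) w)).

Definition rhs54 (m l : nat) (u : nat -> Vec) : tensor :=
  piPi m (tadd (tscale ((g.*2)%:R ^+ l) (vprod (useq u 1 m)))
         (tadd (tscale ((l%:R - (m./2)%:R) * (-1) ^+ l) (Phi1 m u))
               (tscale ((-1) ^+ l) (Phi2 m u)))).
End Tensors.

From mathcomp Require Import all_boot all_order all_algebra.
From mathcomp Require Import zify ring.
From Stdlib Require Import FunctionalExtensionality.
Set Implicit Arguments. Unset Strict Implicit. Unset Printing Implicit Defensive.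
Import Order.TTheory GRing.Theory Num.Theory.
Local Open Scope ring_scope.

(* The cyclic symmetrization |u_1 ... u_m omega0^l| is the sum of the rotations
   nu^p, p < m + 2l, and omega0^l = \sum_v Cont(v) v over the basis words v of
   length 2l, so the left-hand side is a sum of one contraction pattern per
   rotation.  As omega0 and C have the same matrix J, with J^2 = -1 and
   \sum_(a,b) J_ab^2 = 2g, a chain of contractions through copies of omega0
   collapses to a sign times a Kronecker delta, and each closed loop gives 2g.
   The rotation p = 0 gives (2g)^l u_1 ... u_m; the odd rotations p < m and
   p > 2l give the two families of terms of Phi_2, and each of the l - m/2 odd
   rotations m < p < 2l gives the same multiple of Phi_1.  Every even rotation
   p <> 0 leaves an omega0 on the first two or on the last two tensor factors,
   and pi kills it. *)

Lemma rot_cat_size (T : Type) p (s t : seq T) : size s = p -> rot p (s ++ t) = t ++ s.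
Proof. by move=> <-; apply: rot_size_cat. Qed.

Lemma seq_split_cons (T : Type) (w : seq T) n : (n < size w)%N ->
  exists x s t, [/\ w = x :: s ++ t, size s = n & size t = (size w - n.+1)%N].
Proof.
case: w => [|x w] //= lt_nw; exists x, (take n w), (drop n w).
by rewrite cat_take_drop size_drop size_takel // subSS.
Qed.

Lemma seq_split_rcons (T : Type) (w : seq T) n : (n < size w)%N ->
  exists s t y, [/\ w = s ++ t ++ [:: y], size s = (size w - n.+1)%N & size t = n].
Proof.
case/lastP: w => [|w y] //; rewrite size_rcons => lt_nw.
exists (take (size w - n) w), (drop (size w - n) w), y.
by rewrite catA cat_take_drop cats1 size_drop size_takel ?leq_subr // subSS subKn.
Qed.

Lemma seq_ends2 (T : Type) (w : seq T) : (4 <= size w)%N ->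
  exists i1 i2 s j1 j2, w = i1 :: i2 :: s ++ [:: j1; j2].
Proof.
case: w => [|i1 [|i2 w]] //=; case/lastP: w => [|w j2] //; case/lastP: w => [|s j1] // _.
by exists i1, i2, s, j1, j2; rewrite -!cats1 -catA.
Qed.

Section BigSums.
Variable R : comPzRingType.

Lemma signr_subn k n : (k <= n)%N -> (-1) ^+ (n - k) = (-1) ^+ n * (-1) ^+ k :> R.
Proof.
by move=> le_kn; rewrite -{2}(subnK le_kn) exprD -mulrA -exprMn mulrNN mulr1 expr1n mulr1.
Qed.

Lemma sum_delta (I : finType) (x : I) (F : I -> R) : \sum_(b : I) (b == x)%:R * F b = F x.
Proof. by rewrite (bigD1 x) //= eqxx mul1r big1 ?addr0 // => b /negbTE ->; rewrite mul0r. Qed.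

Lemma sum_rotr_rot (T : Type) (z : seq T) (F : seq T -> R) :
  \sum_(k < size z) F (rotr k z) = \sum_(k < size z) F (rot k z).
Proof.
case sz_z: (size z) => [|N]; first by rewrite !big_ord0.
rewrite -(big_mkord xpredT (fun k => F (rotr k z))) -(big_mkord xpredT (fun k => F (rot k z))).
rewrite big_ltn // [RHS]big_ltn // /rotr sz_z subn0 rot0.
rewrite -[in rot N.+1 z]sz_z rot_size; congr (_ + _).
by rewrite big_nat_rev /=; apply: eq_big_nat => k lt_k; congr (F (rot _ z)); lia.
Qed.

Lemma big_nat_double (F : nat -> R) n :
  \sum_(0 <= p < n.*2) F p = \sum_(0 <= j < n) F j.*2 + \sum_(0 <= j < n) F j.*2.+1.
Proof.
elim: n => [|n IHn]; first by rewrite !big_geq ?addr0.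
by rewrite doubleS !big_nat_recr //= IHn addrACA addrA.
Qed.

Lemma big_odd_double (F : nat -> R) n :
  \sum_(1 <= k < n.*2 | odd k) F k = \sum_(0 <= i < n) F i.*2.+1.
Proof.
case: n => [|n]; first by rewrite !big_geq.
have -> : \sum_(1 <= k < n.+1.*2 | odd k) F k = \sum_(0 <= k < n.+1.*2 | odd k) F k.
  by rewrite [RHS]big_ltn_cond.
rewrite big_mkcond big_nat_double big1 ?add0r => [|j _]; last by rewrite odd_double.
by apply: eq_bigr => j _ /=; rewrite odd_double.
Qed.

End BigSums.

Section WordSums.
Variables (R : comPzRingType) (I : finType).

Fixpoint wsum (n : nat) (F : seq I -> R) : R :=
  if n is n'.+1 then \sum_(i : I) wsum n' (fun s => F (i :: s)) else F [::].

Lemma wsumS n F : wsum n.+1 F = \sum_(i : I) wsum n (fun s => F (i :: s)).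
Proof. by []. Qed.

Lemma eq_wsum n F G : (forall s, size s = n -> F s = G s) -> wsum n F = wsum n G.
Proof.
elim: n F G => [|n IHn] F G eqFG /=; first exact: eqFG.
by apply: eq_bigr => i _; apply: IHn => s sz_s; apply: eqFG; rewrite /= sz_s.
Qed.

Lemma wsum_cat a b F : wsum (a + b) F = wsum a (fun s => wsum b (fun t => F (s ++ t))).
Proof. by elim: a F => [|a IHa] F //=; apply: eq_bigr => i _; rewrite IHa. Qed.

Lemma mulr_wsumr n c F : c * wsum n F = wsum n (fun s => c * F s).
Proof.
elim: n F => [|n IHn] F //=.
by rewrite mulr_sumr; apply: eq_bigr => i _; rewrite IHn.
Qed.

Lemma mulr_wsuml n c F : wsum n F * c = wsum n (fun s => F s * c).
Proof. by rewrite mulrC mulr_wsumr; apply: eq_wsum => s _; rewrite mulrC. Qed.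

Lemma exchange_wsum_big n (J : Type) (r : seq J) (P : pred J) (F : J -> seq I -> R) :
  wsum n (fun s => \sum_(j <- r | P j) F j s) = \sum_(j <- r | P j) wsum n (F j).
Proof.
elim: n F => [|n IHn] F //=.
by rewrite exchange_big; apply: eq_bigr => i _; rewrite IHn.
Qed.

Lemma big_tuple_wsum n (F : seq I -> R) : \sum_(t : n.-tuple I) F t = wsum n F.
Proof.
elim: n F => [|n IHn] F /=.
  by rewrite (big_pred1 [tuple]) // => t; rewrite [t]tuple0; apply/esym/eqP.
under [RHS]eq_bigr do rewrite -IHn.
rewrite pair_big /= (reindex (fun p : I * n.-tuple I => [tuple of p.1 :: p.2])) //=.
exists (fun t : n.+1.-tuple I => (thead t, behead_tuple t)).
  by move=> [i t] _ /=; congr pair; apply: val_inj.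
by move=> t _; apply: val_inj; case: t => [[|a s] //= _].
Qed.

Lemma wsum_split_letter a b F :
  wsum (a + (1 + b)) F = wsum a (fun s => \sum_(x : I) wsum b (fun t => F (s ++ x :: t))).
Proof. by rewrite wsum_cat; apply: eq_wsum => s _; rewrite wsum_cat. Qed.

Lemma wsum_mul_letter_r a b H F G :
    (forall s x t, size s = a -> size t = b -> H (s ++ x :: t) = F s * G x t) ->
  wsum (a + (1 + b)) H = wsum a F * \sum_(x : I) wsum b (G x).
Proof.
move=> eqH; rewrite wsum_split_letter mulr_wsuml; apply: eq_wsum => s sz_s.
rewrite mulr_sumr; apply: eq_bigr => x _; rewrite mulr_wsumr.
by apply: eq_wsum => t sz_t; rewrite eqH.
Qed.

Lemma wsum_mul_letter_l a b H F G :
    (forall s x t, size s = a -> size t = b -> H (s ++ x :: t) = F s x * G t) ->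
  wsum (a + (1 + b)) H = (\sum_(x : I) wsum a (F^~ x)) * wsum b G.
Proof.
move=> eqH; rewrite wsum_split_letter -exchange_wsum_big mulr_wsuml.
apply: eq_wsum => s sz_s; rewrite mulr_suml; apply: eq_bigr => x _.
by rewrite mulr_wsumr; apply: eq_wsum => t sz_t; rewrite eqH.
Qed.

Lemma wsum_mul_two_letters a b c H F G E :
    (forall s x t z r, size s = a -> size t = b -> size r = c ->
       H (s ++ x :: t ++ z :: r) = F s x * G t * E z r) ->
  wsum (a + (1 + (b + (1 + c)))) H =
  (\sum_(x : I) wsum a (F^~ x)) * wsum b G * \sum_(z : I) wsum c (E z).
Proof.
move=> eqH; rewrite wsum_split_letter -exchange_wsum_big -mulrA mulr_wsuml.
apply: eq_wsum => s sz_s; rewrite mulr_suml; apply: eq_bigr => x _.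
rewrite (@wsum_mul_letter_r b c _ (fun t => F s x * G t) E); first by rewrite -mulr_wsumr mulrA.
by move=> t z r sz_t sz_r; rewrite eqH.
Qed.

End WordSums.

Section Contractions.
Variables (K : fieldType) (g : nat).
Local Notation idx := (idx g).
Local Notation Vec := (Vec K g).
Local Notation tensor := (tensor K g).
Local Notation Cmat := (@Cmat K g).
Local Notation Contw := (@Contw K g).
Local Notation D := ((g.*2)%:R : K).
Local Notation omega := (@omega0 K g).

(** * The matrix of omega0 and C *)

Lemma ltn_idx (i : idx) : (i < g + g)%N.
Proof. by rewrite addnn. Qed.

Definition dual_nat (i : idx) : nat := if (i < g)%N then (i + g)%N else (i - g)%N.

Lemma dual_nat_lt (i : idx) : (dual_nat i < g.*2)%N.
Proof.
suff: (dual_nat i < g + g)%N by rewrite addnn.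
by have := ltn_idx i; rewrite /dual_nat; case: ifP; lia.
Qed.

Definition dual (i : idx) : idx := Ordinal (dual_nat_lt i).

Definition dsign (i : idx) : K := if (i < g)%N then 1 else -1.

Lemma CmatE (i j : idx) : Cmat i j = dsign i * (j == dual i)%:R.
Proof.
have lt_i := ltn_idx i; have lt_j := ltn_idx j.
rewrite /Cmat /dsign -val_eqE /= /dual_nat.
case: (ltnP i g) => /= hi.
  case: eqP => e /=; rewrite ?mulr1 ?mulr0 //.
  by case: ifP => // /andP[_ /eqP]; lia.
have -> : ((j < g) && (nat_of_ord i == j + g))%N = (nat_of_ord j == i - g)%N.
  by apply/andP/eqP => [[/eqP]|]; lia.
by case: eqP; rewrite ?mulr1 ?mulr0.
Qed.

Lemma dualK : involutive dual.
Proof.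
move=> i; apply: val_inj; rewrite /= {1}/dual_nat /= /dual_nat.
by have lt_i := ltn_idx i; case: (ltnP i g) => hi /=; case: ltnP; lia.
Qed.

Lemma dsign_dual (i : idx) : dsign (dual i) = - dsign i.
Proof.
rewrite /dsign /= /dual_nat.
by have lt_i := ltn_idx i; case: (ltnP i g) => hi /=; case: ltnP; rewrite ?opprK //; lia.
Qed.

Lemma dsign_sqr (i : idx) : dsign i * dsign i = 1.
Proof. by rewrite /dsign; case: ifP; rewrite ?mulr1 ?mulrNN ?mulr1. Qed.

Lemma Cmat_row (i : idx) (F : idx -> K) : \sum_j Cmat i j * F j = dsign i * F (dual i).
Proof.
by rewrite -(sum_delta (dual i) F) mulr_sumr; apply: eq_bigr => j _; rewrite CmatE mulrA.
Qed.

Lemma CmatC (i j : idx) : Cmat j i = - Cmat i j.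
Proof.
rewrite !CmatE; have [->|ne] := eqVneq j (dual i).
  by rewrite dualK eqxx dsign_dual !mulr1.
by rewrite (introF eqP) ?mulr0 ?oppr0 // => eq_ij; rewrite eq_ij dualK eqxx in ne.
Qed.

Lemma Cmat_sqr (a c : idx) : \sum_b Cmat a b * Cmat b c = - (a == c)%:R.
Proof. by rewrite Cmat_row CmatE dsign_dual mulrA mulrN dsign_sqr mulN1r dualK eq_sym. Qed.

Lemma Cmat_norm : \sum_(a : idx) \sum_(b : idx) Cmat a b * Cmat a b = D.
Proof.
transitivity (\sum_(a : idx) (1 : K)); last by rewrite sumr_const card_ord.
apply: eq_bigr => a _; have := Cmat_sqr a a; rewrite eqxx /= => sqr_aa.
rewrite -[RHS]opprK -sqr_aa -sumrN.
by apply: eq_bigr => b _; rewrite [Cmat b a]CmatC mulrN opprK.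
Qed.

Lemma Contw_cat n (s t : seq idx) : size s = n.*2 -> Contw (s ++ t) = Contw s * Contw t.
Proof.
elim: n s => [|n IHn] [|a [|b s]] //= sz_s; first by rewrite mul1r.
by rewrite (IHn s) ?mulrA //; move: sz_s; rewrite doubleS => -[].
Qed.

Lemma wsum_Contw_chain n (x y : idx) :
  wsum n.*2.+1 (fun v => Contw (x :: v) * Contw (v ++ [:: y])) = (-1) ^+ n.+1 * (x == y)%:R.
Proof.
elim: n x y => [|n IHn] x y.
  by rewrite /= expr1 mulN1r -Cmat_sqr; apply: eq_bigr => i _; rewrite !mulr1.
rewrite doubleS wsumS; under eq_bigr do rewrite wsumS.
transitivity (\sum_a \sum_b Cmat x a * Cmat a b *
    wsum n.*2.+1 (fun v => Contw (b :: v) * Contw (v ++ [:: y]))).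
  apply: eq_bigr => a _; apply: eq_bigr => b _.
  by rewrite mulr_wsumr; apply: eq_wsum => s _ /=; ring.
rewrite exchange_big; under eq_bigr do rewrite -mulr_suml Cmat_sqr IHn.
rewrite -(sum_delta x (fun b => (-1) ^+ n.+2 * (b == y)%:R)); apply: eq_bigr => b _.
by rewrite [x == b]eq_sym !exprS; ring.
Qed.

Lemma wsum_Contw_sqr n : wsum n.*2 (fun v => Contw v * Contw v) = D ^+ n.
Proof.
elim: n => [|n IHn]; first by rewrite /= mulr1.
rewrite doubleS exprS -{1}Cmat_norm mulr_suml wsumS; apply: eq_bigr => a _.
rewrite mulr_suml wsumS; apply: eq_bigr => b _; rewrite -IHn mulr_wsumr.
by apply: eq_wsum => s _ /=; ring.
Qed.

Lemma sum_wsum_Contw_chain_l n (y : idx) (f : idx -> K) :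
  \sum_(x : idx) f x * wsum n.*2.+1 (fun v => Contw (x :: v) * Contw (v ++ [:: y])) =
  (-1) ^+ n.+1 * f y.
Proof.
rewrite -(sum_delta y (fun x => (-1) ^+ n.+1 * f x)).
by apply: eq_bigr => x _; rewrite wsum_Contw_chain; ring.
Qed.

Lemma sum_wsum_Contw_chain_r n (y : idx) (f : idx -> K) :
  \sum_(x : idx) wsum n.*2.+1 (fun v => Contw (y :: v) * Contw (v ++ [:: x]) * f x) =
  (-1) ^+ n.+1 * f y.
Proof.
rewrite -(sum_delta y (fun x => (-1) ^+ n.+1 * f x)); apply: eq_bigr => x _.
by rewrite -mulr_wsuml wsum_Contw_chain eq_sym; ring.
Qed.

(** * Coefficients of products in the tensor algebra *)

Fixpoint wcoef (us : seq Vec) (z : seq idx) : K :=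
  match us, z with
  | [::], [::] => 1
  | v :: us', i :: z' => v i * wcoef us' z'
  | _, _ => 0
  end.

Lemma wcoef_cat us1 us2 z1 z2 : size z1 = size us1 ->
  wcoef (us1 ++ us2) (z1 ++ z2) = wcoef us1 z1 * wcoef us2 z2.
Proof.
elim: us1 z1 => [|v us IHus] [|i z] //= sz_z; first by rewrite mul1r.
by rewrite IHus ?mulrA //; case: sz_z.
Qed.

Lemma wcoef_eq0 us z : size z <> size us -> wcoef us z = 0.
Proof.
elim: us z => [|v us IHus] [|i z] //= sz_z.
by rewrite IHus ?mulr0 // => eq_sz; apply: sz_z; rewrite eq_sz.
Qed.

Lemma wsum_Contw_wcoef us : wsum (size us) (fun v => Contw v * wcoef us v) = Cont us.
Proof.
have [n] := ubnP (size us); elim: n us => // n IHn [|v [|w us]] /= sz_us; rewrite ?mulr1 //.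
  by apply: big1 => i _; rewrite mul0r.
rewrite /Cbil mulr_suml; apply: eq_bigr => a _; rewrite mulr_suml; apply: eq_bigr => b _.
rewrite -(IHn us) ?mulr_wsumr; last by move: sz_us => /=; lia.
by apply: eq_wsum => s _ /=; ring.
Qed.

Definition homog n (x : tensor) := forall s, size s <> n -> x s = 0.

Lemma tmul_homog a (x y : tensor) z : homog a x ->
  tmul x y z = if (a <= size z)%N then x (take a z) * y (drop a z) else 0.
Proof.
rewrite /tmul => x_a; case: (leqP a (size z)) => le_az; last first.
  by apply: big1 => k _; rewrite x_a ?mul0r // size_take; have := ltn_ord k; case: ifP; lia.
rewrite (bigD1 (Ordinal (le_az : (a < (size z).+1)%N))) //= big1 ?addr0 // => k /eqP ne_ka.
rewrite x_a ?mul0r // size_take => eq_ka; apply: ne_ka; apply: val_inj => /=.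
by move: eq_ka; have := ltn_ord k; case: ifP; lia.
Qed.

Lemma tmul_homog_cat a (x y : tensor) s t : homog a x -> size s = a ->
  tmul x y (s ++ t) = x s * y t.
Proof.
move=> x_a sz_s; rewrite (tmul_homog _ _ x_a) size_cat ifT; last by lia.
by rewrite take_size_cat // drop_size_cat.
Qed.

Lemma vtens_homog (v : Vec) : homog 1 (vtens v).
Proof. by case=> [|i [|j s]]. Qed.

Lemma vprodE us z : vprod us z = wcoef us z.
Proof.
elim: us z => [|v us IHus] [|i z] //=.
  by rewrite (tmul_homog _ _ (@vtens_homog v)).
by rewrite -cat1s (tmul_homog_cat _ _ (@vtens_homog v)) //= IHus.
Qed.

Lemma vprod_homog us : homog (size us) (vprod us).
Proof. by move=> s sz_s; rewrite vprodE wcoef_eq0. Qed.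

Lemma omega0_homog : homog 2 omega.
Proof. by case=> [|i [|j [|k s]]]. Qed.

Lemma texp_omega0E n z : texp omega n z = (size z == n.*2)%:R * Contw z.
Proof.
elim: n z => [|n IHn] z; first by rewrite /texp /= /tone; case: z => [|i z]; rewrite ?mul1r ?mul0r.
rewrite /texp iterS -/(texp _ n) (tmul_homog _ _ omega0_homog).
by case: z => [|i [|j z]] /=; rewrite ?mul0r // take0 drop0 IHn doubleS !eqSS; ring.
Qed.

Lemma texp_omega0_homog n : homog n.*2 (texp omega n).
Proof. by move=> s /eqP/negbTE sz_s; rewrite texp_omega0E sz_s mul0r. Qed.

(** * The projection pi on the first and last two factors *)

Lemma piFirstE (x : tensor) i1 i2 r :
  piFirst x (i1 :: i2 :: r) =
  x (i1 :: i2 :: r) - Cmat i1 i2 / D * \sum_(a : idx) \sum_(b : idx) Cmat a b * x (a :: b :: r).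
Proof. by []. Qed.

Lemma piLastE (x : tensor) s j1 j2 :
  piLast x (s ++ [:: j1; j2]) =
  x (s ++ [:: j1; j2]) -
  Cmat j1 j2 / D * \sum_(a : idx) \sum_(b : idx) Cmat a b * x (s ++ [:: a; b]).
Proof. by rewrite /piLast rev_cat /= revK. Qed.

Lemma sum_Cmat_mulD (F G : idx -> idx -> K) :
  \sum_(a : idx) \sum_(b : idx) Cmat a b * (F a b + G a b) =
  \sum_(a : idx) \sum_(b : idx) Cmat a b * F a b + \sum_(a : idx) \sum_(b : idx) Cmat a b * G a b.
Proof.
rewrite -big_split; apply: eq_bigr => a _.
by rewrite -big_split; apply: eq_bigr => b _; rewrite mulrDr.
Qed.

Lemma piFirstD (x y : tensor) w : piFirst (tadd x y) w = piFirst x w + piFirst y w.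
Proof. by case: w => [|i1 [|i2 r]] //; rewrite !piFirstE /tadd sum_Cmat_mulD; ring. Qed.

Lemma piLastD (x y : tensor) w : piLast (tadd x y) w = piLast x w + piLast y w.
Proof.
rewrite /piLast /tadd; case: (rev w) => [|j2 [|j1 r]] //.
by rewrite sum_Cmat_mulD; ring.
Qed.

Lemma piFirst_ext n (x y : tensor) : (forall w, size w = n -> x w = y w) ->
  forall w, size w = n -> piFirst x w = piFirst y w.
Proof.
move=> eq_xy [|i1 [|i2 r]] sz_w; rewrite /piFirst ?eq_xy //.
by congr (_ - _ * _); apply: eq_bigr => a _; apply: eq_bigr => b _; rewrite eq_xy.
Qed.

Lemma piLast_ext n (x y : tensor) : (forall w, size w = n -> x w = y w) ->
  forall w, size w = n -> piLast x w = piLast y w.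
Proof.
move=> eq_xy w sz_w; rewrite /piLast.
have := size_rev w; rewrite sz_w; case: (rev w) => [|j2 [|j1 r]] sz_r; rewrite ?eq_xy //.
congr (_ - _ * _); apply: eq_bigr => a _; apply: eq_bigr => b _.
by rewrite eq_xy // size_cat size_rev /= -sz_r addn2.
Qed.

Lemma piPi_ext m (x y : tensor) : (forall w, size w = m -> x w = y w) ->
  piPi m x = piPi m y.
Proof.
move=> eq_xy; apply: functional_extensionality => w; rewrite /piPi; case: eqP => // sz_w.
by apply: (piLast_ext (n := m)) => // z sz_z; apply: (piFirst_ext eq_xy).
Qed.

Lemma piPiD m (x y : tensor) w : piPi m (tadd x y) w = piPi m x w + piPi m y w.
Proof.
rewrite /piPi; case: eqP => sz_w; last by rewrite addr0.
by rewrite -piLastD; apply: (piLast_ext (n := m)) => // z _; apply: piFirstD.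
Qed.

Lemma piPi_sum m (J : Type) (r : seq J) (P : pred J) (F : J -> tensor) w :
  piPi m (fun z => \sum_(j <- r | P j) F j z) w = \sum_(j <- r | P j) piPi m (F j) w.
Proof.
elim: r => [|j r IHr].
  rewrite big_nil (_ : (fun z => _) = fun _ => 0); last first.
    by apply: functional_extensionality => z; rewrite big_nil.
  by apply: (@addrI _ (piPi m (fun _ => 0) w)); rewrite addr0 -piPiD /tadd addr0.
rewrite big_cons -IHr (_ : (fun z => _) = fun z =>
    if P j then F j z + \sum_(i <- r | P i) F i z else \sum_(i <- r | P i) F i z); last first.
  by apply: functional_extensionality => z; rewrite big_cons.
by case: (P j); rewrite -?piPiD.
Qed.

Definition first_omega m (x : tensor) := exists y : seq idx -> K,
  forall i1 i2 r, size r = (m - 2)%N -> x (i1 :: i2 :: r) = Cmat i1 i2 * y r.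

Definition last_omega m (x : tensor) := exists y : seq idx -> K,
  forall s j1 j2, size s = (m - 2)%N -> x (s ++ [:: j1; j2]) = y s * Cmat j1 j2.

Lemma sum_Cmat_sqr_mul (c : K) : \sum_(a : idx) \sum_(b : idx) Cmat a b * (Cmat a b * c) = D * c.
Proof.
rewrite -Cmat_norm mulr_suml; apply: eq_bigr => a _.
by rewrite mulr_suml; apply: eq_bigr => b _; rewrite mulrA.
Qed.

Hypothesis charK0 : [pchar K] =i pred0.

Lemma natr_dim_neq0 (i : idx) : D != 0.
Proof. by rewrite ((pcharf0P K).1 charK0) -lt0n (leq_ltn_trans (leq0n i)). Qed.

Lemma piPi_first_omega m x w : (4 <= m)%N -> first_omega m x -> piPi m x w = 0.
Proof.
move=> le4m [y eq_xy]; rewrite /piPi; case: eqP => // sz_w.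
have [//|i1 [i2 [s [j1 [j2 def_w]]]]] := @seq_ends2 _ w; first by rewrite sz_w.
have sz_s : size (s ++ [:: j1; j2]) = (m - 2)%N by move: sz_w; rewrite def_w /=; lia.
have piFirst_x0 r a b : size r = (m - 2)%N -> piFirst x (a :: b :: r) = 0.
  move=> sz_r; rewrite piFirstE eq_xy //.
  under eq_bigr do under eq_bigr do rewrite eq_xy //.
  by rewrite sum_Cmat_sqr_mul mulrA divfK ?subrr // natr_dim_neq0.
rewrite def_w -!cat_cons piLastE !cat_cons piFirst_x0 // big1 ?mulr0 ?subrr // => a _.
by rewrite big1 // => b _; rewrite !cat_cons piFirst_x0 ?mulr0 // size_cat /= -sz_s size_cat.
Qed.

Lemma piPi_last_omega m x w : (4 <= m)%N -> last_omega m x -> piPi m x w = 0.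
Proof.
move=> le4m [y eq_xy]; rewrite /piPi; case: eqP => // sz_w.
have [//|i1 [i2 [s [j1 [j2 def_w]]]]] := @seq_ends2 _ w; first by rewrite sz_w.
have sz_s : size (i1 :: i2 :: s) = (m - 2)%N by move: sz_w; rewrite def_w /= size_cat /=; lia.
have piFirst_xE a b : piFirst x (i1 :: i2 :: s ++ [:: a; b]) = piFirst y (i1 :: i2 :: s) * Cmat a b.
  rewrite !piFirstE -!cat_cons eq_xy // mulrBl -!mulrA mulr_suml; congr (_ - _ * (_ * _)).
  apply: eq_bigr => a' _; rewrite mulr_suml; apply: eq_bigr => b' _.
  by rewrite -!cat_cons eq_xy ?mulrA // -sz_s.
rewrite def_w -!cat_cons piLastE !cat_cons piFirst_xE.
under eq_bigr do under eq_bigr do rewrite !cat_cons piFirst_xE [_ * Cmat _ _]mulrC.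
by rewrite sum_Cmat_sqr_mul mulrA divfK ?natr_dim_neq0 // mulrC subrr.
Qed.

(** * The rotations of u_1 ... u_m omega0^l *)

Section RotationTerms.
Variables (m l : nat) (u : nat -> Vec).

Lemma size_useq a b : size (useq u a b) = (b.+1 - a)%N.
Proof. by rewrite size_map size_iota. Qed.

Lemma useq_cat a b c : (a <= b.+1)%N -> (b <= c)%N ->
  useq u a c = useq u a b ++ useq u b.+1 c.
Proof.
move=> le_ab le_bc; rewrite /useq -map_cat.
by rewrite -{2}(subnKC le_ab) -iotaD; congr (map _ (iota _ _)); lia.
Qed.

Lemma useq1 a : useq u a a = [:: u a].
Proof. by rewrite /useq subSnn. Qed.

Definition ucoef (z : seq idx) : K := wcoef (useq u 1 m) (take m z) * Contw (drop m z).

Lemma ucoef_cat s t : size s = m -> ucoef (s ++ t) = wcoef (useq u 1 m) s * Contw t.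
Proof. by move=> sz_s; rewrite /ucoef take_size_cat // drop_size_cat. Qed.

(* [rot_term p w] is the contribution of the rotation [nu^p] to the coefficient
   of the word [w] in the left-hand side. *)
Definition rot_term (p : nat) (w : seq idx) : K :=
  wsum l.*2 (fun v => Contw v * ucoef (rot p (w ++ v))).

Lemma contract_cycE w : size w = m ->
  contract m l (cyc (tmul (vprod (useq u 1 m)) (texp omega l))) w =
  \sum_(0 <= p < m + l.*2) rot_term p w.
Proof.
move=> sz_w; set x := cyc _; rewrite /contract sz_w eqxx.
rewrite (big_tuple_wsum _ (fun v => x (w ++ v) * Contw v)) /rot_term -exchange_wsum_big.
apply: eq_wsum => v sz_v; rewrite /cyc mulr_suml big_mkord.
have sz_wv : size (w ++ v) = (m + l.*2)%N by rewrite size_cat sz_w sz_v.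
rewrite (sum_rotr_rot (w ++ v) (fun z => tmul _ _ z * Contw v)) sz_wv.
apply: eq_bigr => k _; rewrite mulrC (tmul_homog _ _ (@vprod_homog _)) size_useq subn1 /=.
rewrite size_rot sz_wv leq_addr vprodE texp_omega0E size_drop size_rot sz_wv addKn.
by rewrite eqxx mul1r.
Qed.

Lemma rot_term0 w : size w = m -> rot_term 0 w = D ^+ l * vprod (useq u 1 m) w.
Proof.
move=> sz_w; rewrite /rot_term vprodE -wsum_Contw_sqr mulr_wsuml.
by apply: eq_wsum => v _; rewrite rot0 ucoef_cat //; ring.
Qed.

Lemma useq_split_last k : (0 < k < m)%N ->
  useq u 1 m = useq u 1 (m - k) ++ useq u (m - k + 1) (m - 1) ++ [:: u m].
Proof.
case/andP=> lt0k lt_km.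
rewrite (@useq_cat 1 (m - 1) m) ?(@useq_cat 1 (m - k) (m - 1)) -?catA ?addn1; try lia.
by rewrite (_ : (m - 1).+1 = m) ?useq1 //; lia.
Qed.

Lemma useq_split_first k : (0 < k < m)%N -> useq u 1 m = u 1%N :: useq u 2 k ++ useq u k.+1 m.
Proof. by case/andP=> lt0k lt_km; rewrite (@useq_cat 1 1 m) ?useq1 ?(@useq_cat 2 k m) //; lia. Qed.

Definition phi2_left i : tensor :=
  tmul (vtens (u m)) (tmul (texp omega i) (vprod (useq u 1 (m - i.*2.+1)))).

Definition phi2_right i : tensor :=
  tmul (vprod (useq u i.*2.+2 m)) (tmul (texp omega i) (vtens (u 1%N))).

Definition phi1 : tensor := tmul (vtens (u m)) (tmul (texp omega (m./2 - 1)) (vtens (u 1%N))).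

Lemma phi2_leftE i w0 w1 w2 : size w1 = i.*2 ->
  phi2_left i (w0 :: w1 ++ w2) = u m w0 * (Contw w1 * wcoef (useq u 1 (m - i.*2.+1)) w2).
Proof.
move=> sz_w1; rewrite /phi2_left -cat1s (tmul_homog_cat _ _ (@vtens_homog _)) //.
by rewrite (tmul_homog_cat _ _ (@texp_omega0_homog i)) // texp_omega0E vprodE sz_w1 eqxx mul1r.
Qed.

Lemma phi2_rightE i w1 w2 y : size w1 = (m - i.*2.+1)%N -> size w2 = i.*2 ->
  phi2_right i (w1 ++ w2 ++ [:: y]) = wcoef (useq u i.*2.+2 m) w1 * (Contw w2 * u 1%N y).
Proof.
move=> sz_w1 sz_w2; rewrite /phi2_right (tmul_homog_cat _ _ (@vprod_homog _)); last first.
  by rewrite size_useq; lia.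
by rewrite (tmul_homog_cat _ _ (@texp_omega0_homog i)) // texp_omega0E vprodE sz_w2 eqxx mul1r.
Qed.

Lemma phi1E w0 w1 y : size w1 = (m./2 - 1).*2 ->
  phi1 (w0 :: w1 ++ [:: y]) = u m w0 * (Contw w1 * u 1%N y).
Proof.
move=> sz_w1; rewrite /phi1 -cat1s (tmul_homog_cat _ _ (@vtens_homog _)) //.
by rewrite (tmul_homog_cat _ _ (@texp_omega0_homog _)) // texp_omega0E sz_w1 eqxx mul1r.
Qed.

Lemma rot_term_phi2_left i w : (i.*2.+1 < m)%N -> (i < l)%N -> size w = m ->
  rot_term i.*2.+1 w =
  (-1) ^+ l * (-1) ^+ i * Cont (useq u (m - i.*2.+1 + 1) (m - 1)) * phi2_left i w.
Proof.
move=> lt_im lt_il sz_w; have def_us : useq u 1 m = _ := useq_split_last (k := i.*2.+1) lt_im.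
have [|w0 [w1 [w2 [def_w sz_w1 sz_w2]]]] := @seq_split_cons _ w i.*2; first lia.
rewrite sz_w in sz_w2; rewrite def_w phi2_leftE //.
set us1 := useq u 1 (m - i.*2.+1); set us2 := useq u (m - i.*2.+1 + 1) (m - 1).
rewrite /rot_term (_ : l.*2 = (i.*2 + (1 + (l - i - 1).*2.+1))%N); last by lia.
rewrite (@wsum_mul_letter_r _ _ _ _ _
   (fun v1 => Contw v1 * wcoef us2 v1 * (Contw w1 * wcoef us1 w2))
   (fun x v2 => u m x * (Contw (x :: v2) * Contw (v2 ++ [:: w0])))); last first.
  move=> v1 x v2 sz_v1 sz_v2.
  have -> : rot i.*2.+1 ((w0 :: w1 ++ w2) ++ v1 ++ x :: v2) =
            (w2 ++ v1 ++ [:: x]) ++ ((v2 ++ [:: w0]) ++ w1).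
    by rewrite -cat_cons -catA rot_cat_size -?catA //= sz_w1.
  rewrite ucoef_cat ?def_us; last by rewrite !size_cat sz_w2 sz_v1 /=; lia.
  (* [sz_v1] is typed over [Finite.sort] of the alphabet of [wsum], which [lia] does not
     identify with [idx]: rewrite it first. *)
  rewrite !wcoef_cat ?size_useq ?[wcoef [:: _] _]/= ?sz_v1; try lia.
  rewrite (@Contw_cat i v1) // (@Contw_cat (l - i)); first by ring.
  by rewrite size_cat sz_v2 /=; lia.
under eq_bigr do rewrite -mulr_wsumr.
rewrite sum_wsum_Contw_chain_l -mulr_wsuml (_ : i.*2 = size us2); last by rewrite size_useq; lia.
rewrite wsum_Contw_wcoef (_ : ((l - i - 1).+1 = l - i)%N); last by lia.
by rewrite signr_subn; [ring | lia].
Qed.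

Lemma rot_term_phi2_right i w : (i.*2.+1 < m)%N -> (i < l)%N -> size w = m ->
  rot_term (m + (l.*2 - i.*2.+1)) w =
  (-1) ^+ l * (-1) ^+ i * Cont (useq u 2 i.*2.+1) * phi2_right i w.
Proof.
move=> lt_im lt_il sz_w; have def_us : useq u 1 m = _ := useq_split_first (k := i.*2.+1) lt_im.
have [|w1 [w2 [y [def_w sz_w1 sz_w2]]]] := @seq_split_rcons _ w i.*2; first lia.
rewrite sz_w in sz_w1; rewrite def_w phi2_rightE //.
set us2 := useq u 2 i.*2.+1; set us3 := useq u i.*2.+2 m; set p := (m + _)%N.
rewrite /rot_term (_ : l.*2 = ((l - i - 1).*2.+1 + (1 + i.*2))%N); last by lia.
rewrite (@wsum_mul_letter_l _ _ _ _ _ (fun v1 x => Contw (y :: v1) * Contw (v1 ++ [:: x]) * u 1%N x)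
   (fun v2 => Contw v2 * wcoef us2 v2 * (wcoef us3 w1 * Contw w2))); last first.
  move=> v1 x v2 sz_v1 sz_v2.
  have -> : rot p ((w1 ++ w2 ++ [:: y]) ++ v1 ++ x :: v2) = (x :: v2 ++ w1) ++ (w2 ++ y :: v1).
    rewrite (catA _ v1) rot_cat_size /= -?catA //.
    by rewrite /p !size_cat sz_w1 sz_w2 sz_v1 /=; lia.
  rewrite ucoef_cat ?def_us; last by rewrite /= size_cat sz_v2 sz_w1; lia.
  rewrite [wcoef (_ :: _) _]/= wcoef_cat; last by rewrite size_useq sz_v2; lia.
  rewrite (@Contw_cat i w2) // (_ : v1 ++ x :: v2 = (v1 ++ [:: x]) ++ v2); last by rewrite -catA.
  by rewrite (@Contw_cat (l - i) (v1 ++ [:: x])); [ring | rewrite size_cat sz_v1 /=; lia].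
rewrite -mulr_wsuml (_ : i.*2 = size us2); last by rewrite size_useq; lia.
rewrite wsum_Contw_wcoef sum_wsum_Contw_chain_r (_ : ((l - i - 1).+1 = l - i)%N); last by lia.
by rewrite signr_subn; [ring | lia].
Qed.

Lemma rot_term_phi1 h i w : m = h.*2 -> (0 < h)%N -> (i + h < l)%N -> size w = m ->
  rot_term (m + i.*2.+1) w = (-1) ^+ l * (-1) ^+ (m./2 - 1) * Cont (useq u 2 (m - 1)) * phi1 w.
Proof.
move=> def_m lt0h lt_il sz_w; have half_m : m./2 = h by rewrite def_m half_double.
have def_us : useq u 1 m = u 1%N :: useq u 2 (m - 1) ++ [:: u m].
  rewrite (@useq_split_first (m - 1)); last by lia.
  by rewrite (_ : (m - 1).+1 = m) ?useq1 //; lia.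
have [|w0 [w1 [t [def_w sz_w1]]]] := @seq_split_cons _ w (h - 1).*2; first lia.
rewrite sz_w; case: t def_w => [|y [|? ?]] -> /= sz_t; try lia.
rewrite phi1E half_m //.
set us2 := useq u 2 (m - 1); set p := (m + _)%N; set n := (l - i - h - 1)%N.
rewrite /rot_term (_ : l.*2 = (i.*2.+1 + (1 + ((h - 1).*2 + (1 + n.*2.+1))))%N); last by lia.
rewrite (@wsum_mul_two_letters _ _ _ _ _ _
   (fun v1 x => Contw (y :: v1) * Contw (v1 ++ [:: x]) * u 1%N x)
   (fun v2 => Contw v2 * wcoef us2 v2 * Contw w1)
   (fun z v3 => u m z * (Contw (z :: v3) * Contw (v3 ++ [:: w0])))); last first.
  move=> v1 x v2 z v3 sz_v1 sz_v2 sz_v3.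
  have -> : rot p ((w0 :: w1 ++ [:: y]) ++ v1 ++ x :: v2 ++ z :: v3) =
            (x :: v2 ++ [:: z]) ++ ((v3 ++ [:: w0]) ++ (w1 ++ y :: v1)).
    rewrite (catA _ v1) rot_cat_size /= -?catA //.
    by rewrite /p !size_cat sz_w1 sz_v1 /=; lia.
  rewrite ucoef_cat ?def_us; last by rewrite /= size_cat sz_v2 /=; lia.
  rewrite [wcoef (_ :: _) _]/= wcoef_cat ?[wcoef [:: _] _]/=; last by rewrite size_useq sz_v2; lia.
  rewrite (@Contw_cat n.+1 (v3 ++ [:: w0])); last by rewrite size_cat sz_v3 /=; lia.
  rewrite (@Contw_cat (h - 1) w1) // -[x :: _]cat1s catA (@Contw_cat i.+1 (v1 ++ [:: x])).
    by rewrite (@Contw_cat (h - 1) v2) //; ring.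
  by rewrite size_cat sz_v1 /=; lia.
rewrite -mulr_wsuml (_ : (h - 1).*2 = size us2); last by rewrite size_useq; lia.
rewrite wsum_Contw_wcoef sum_wsum_Contw_chain_r.
under eq_bigr do rewrite -mulr_wsumr.
rewrite sum_wsum_Contw_chain_l.
have -> : (-1) ^+ l * (-1) ^+ (h - 1) = (-1) ^+ i.+1 * (-1) ^+ n.+1 :> K.
  rewrite -!exprD (_ : (l + (h - 1) = (i.+1 + n.+1) + (h - 1).*2)%N); last by lia.
  by rewrite exprD -[(-1) ^+ (h - 1).*2]signr_odd odd_double expr0 mulr1.
by ring.
Qed.

Lemma first_omega_rot_term p (y : seq idx -> seq idx -> K) :
    (forall i1 i2 r v, size r = (m - 2)%N -> size v = l.*2 ->
       ucoef (rot p ((i1 :: i2 :: r) ++ v)) = Cmat i1 i2 * y r v) ->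
  first_omega m (rot_term p).
Proof.
move=> eq_u; exists (fun r => wsum l.*2 (fun v => Contw v * y r v)) => i1 i2 r sz_r.
by rewrite /rot_term mulr_wsumr; apply: eq_wsum => v sz_v; rewrite eq_u //; ring.
Qed.

Lemma last_omega_rot_term p (y : seq idx -> seq idx -> K) :
    (forall s j1 j2 v, size s = (m - 2)%N -> size v = l.*2 ->
       ucoef (rot p ((s ++ [:: j1; j2]) ++ v)) = y s v * Cmat j1 j2) ->
  last_omega m (rot_term p).
Proof.
move=> eq_u; exists (fun s => wsum l.*2 (fun v => Contw v * y s v)) => s j1 j2 sz_s.
by rewrite /rot_term mulr_wsuml; apply: eq_wsum => v sz_v; rewrite eq_u //; ring.
Qed.

Lemma rot_term_first_omega_head i : (i.*2.+2 <= m)%N -> (i < l)%N ->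
  first_omega m (rot_term i.*2.+2).
Proof.
move=> le_im lt_il; apply: (@first_omega_rot_term _ (fun r v =>
  wcoef (useq u 1 m) (drop i.*2 r ++ take i.*2.+2 v) *
  (Contw (drop i.*2.+2 v) * Contw (take i.*2 r)))) => i1 i2 r v sz_r sz_v.
have sz_r1 : size (take i.*2 r) = i.*2 by rewrite size_takel // sz_r; lia.
have sz_v1 : size (take i.*2.+2 v) = i.*2.+2 by rewrite size_takel // sz_v; lia.
have -> : (i1 :: i2 :: r) ++ v = (i1 :: i2 :: take i.*2 r) ++ (drop i.*2 r ++ v).
  by rewrite -[in LHS](cat_take_drop i.*2 r) /= -catA.
rewrite rot_cat_size; last by rewrite /= sz_r1.
rewrite -[v in drop _ r ++ v](cat_take_drop i.*2.+2) -!catA catA.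
rewrite ucoef_cat; last by rewrite size_cat size_drop sz_v1 sz_r; lia.
rewrite (@Contw_cat (l - i.+1)); last by rewrite size_drop sz_v; lia.
by rewrite [Contw (_ :: _ :: _)]/=; ring.
Qed.

Lemma rot_term_first_omega_tail h i : m = h.*2 -> (0 < h)%N -> (m + i.*2.+2 <= l.*2)%N ->
  first_omega m (rot_term (m + i.*2.+2)).
Proof.
move=> def_m lt0h le_pl; set q := i.*2.+2.
apply: (@first_omega_rot_term _ (fun r v => wcoef (useq u 1 m) (take m (drop q v)) *
   (Contw (drop m (drop q v)) * Contw (r ++ take q v)))) => i1 i2 r v sz_r sz_v.
have sz_v1 : size (take q v) = q by rewrite size_takel // sz_v; lia.
rewrite -[v in _ ++ v](cat_take_drop q) catA rot_cat_size; last first.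
  by rewrite size_cat /= sz_v1 sz_r; lia.
rewrite -[drop q v in LHS](cat_take_drop m) -catA.
rewrite ucoef_cat; last by rewrite size_takel // size_drop sz_v; lia.
rewrite (@Contw_cat (l - i.+1 - h)); last by rewrite !size_drop sz_v; lia.
by rewrite [Contw (_ :: _ :: _)]/=; ring.
Qed.

Lemma rot_term_last_omega h i : m = h.*2 -> (i.*2.+4 <= l.*2)%N -> (l.*2 <= m + i.*2)%N ->
  last_omega m (rot_term (m + i.*2.+2)).
Proof.
move=> def_m le_il le_lm; set q := i.*2.+2; set c := (l.*2 - q)%N.
apply: (@last_omega_rot_term _ (fun s v => wcoef (useq u 1 m) (drop q v ++ take (m - c) s) *
   (Contw (drop (m - c) s) * Contw (take q v)))) => s j1 j2 v sz_s sz_v.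
have sz_v1 : size (take q v) = q by rewrite size_takel // sz_v; lia.
have sz_s1 : size (take (m - c) s) = (m - c)%N by rewrite size_takel // sz_s; lia.
rewrite -[v in _ ++ v](cat_take_drop q) catA rot_cat_size; last first.
  by rewrite !size_cat /= sz_v1 sz_s; lia.
rewrite -[s in (s ++ _) ++ take q v](cat_take_drop (m - c)) -!catA catA.
rewrite ucoef_cat; last by rewrite size_cat size_drop sz_s1 sz_v; lia.
rewrite (@Contw_cat (l - i - 2)); last by rewrite size_drop sz_s; lia.
by rewrite [Contw (_ :: _ :: _)]/=; ring.
Qed.

End RotationTerms.

Section Expansion.
Variables (h l : nat) (u : nat -> Vec).
Hypotheses (le2h : (2 <= h)%N) (le_hl : (h <= l)%N).
Local Notation m := h.*2.
Local Notation rot_term := (rot_term h.*2 l u).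

Definition main_part : tensor :=
  tadd (tscale (D ^+ l) (vprod (useq u 1 m)))
       (tadd (tscale ((l%:R - (m./2)%:R) * (-1) ^+ l) (Phi1 m u)) (tscale ((-1) ^+ l) (Phi2 m u))).

Definition even_part : tensor := fun w => \sum_(0 <= j < h + l - 1) rot_term j.*2.+2 w.

Lemma sum_rot_term_odd_head w : size w = m ->
  \sum_(0 <= j < h) rot_term j.*2.+1 w =
  \sum_(0 <= i < h) (-1) ^+ l * (-1) ^+ i * Cont (useq u (m - i.*2.+1 + 1) (m - 1)) *
                    phi2_left m u i w.
Proof.
by move=> sz_w; apply: eq_big_nat => i /andP[_ lt_ih]; rewrite rot_term_phi2_left //; lia.
Qed.

Lemma sum_rot_term_odd_tail w : size w = m ->
  \sum_(0 <= i < l) rot_term (m + i.*2.+1) w =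
  (l - h)%:R * ((-1) ^+ l * (-1) ^+ (m./2 - 1) * Cont (useq u 2 (m - 1)) * phi1 m u w) +
  \sum_(0 <= i < h) (-1) ^+ l * (-1) ^+ i * Cont (useq u 2 i.*2.+1) * phi2_right m u i w.
Proof.
move=> sz_w; rewrite (big_cat_nat (n := (l - h)%N)) //=; last by lia.
congr (_ + _).
  rewrite mulr_natl -[in RHS](subn0 (l - h)%N) -sumr_const_nat.
  apply: eq_big_nat => i /andP[_ lt_i].
  by rewrite (@rot_term_phi1 _ _ _ h) //; lia.
rewrite -{1}(add0n (l - h)%N) big_addn (_ : (l - (l - h) = h)%N); last by lia.
rewrite big_nat_rev /=; apply: eq_big_nat => i /andP[_ lt_ih].
rewrite -rot_term_phi2_right //; try lia.
by congr (rot_term _ w); lia.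
Qed.

Lemma Phi2E w : Phi2 m u w = \sum_(0 <= i < h) (-1) ^+ i *
  (Cont (useq u (m - i.*2.+1 + 1) (m - 1)) * phi2_left m u i w +
   Cont (useq u 2 i.*2.+1) * phi2_right m u i w).
Proof. by rewrite /Phi2 big_odd_double; apply: eq_bigr => i _; rewrite /= half_double. Qed.

Lemma contract_cyc_split w : size w = m ->
  contract m l (cyc (tmul (vprod (useq u 1 m)) (texp omega l))) w = tadd main_part even_part w.
Proof.
move=> sz_w; rewrite contract_cycE // (_ : (m + l.*2)%N = (h + l).*2) ?big_nat_double; last by lia.
rewrite big_ltn; last by lia.
rewrite big_add1 /= rot_term0 // [\sum_(0 <= j < h + l) _](big_cat_nat (n := h)) //=; last by lia.
rewrite (big_addn 0 (h + l) h) (_ : (h + l - h = l)%N); last by lia.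
rewrite [\sum_(0 <= i < l) _](eq_bigr (fun i => rot_term (m + i.*2.+1) w)) => [|i _]; last first.
  by congr (rot_term _ w); lia.
rewrite sum_rot_term_odd_head // sum_rot_term_odd_tail //.
have Phi2_sum : (-1) ^+ l * Phi2 m u w =
    \sum_(0 <= i < h) (-1) ^+ l * (-1) ^+ i * Cont (useq u (m - i.*2.+1 + 1) (m - 1)) *
                      phi2_left m u i w +
    \sum_(0 <= i < h) (-1) ^+ l * (-1) ^+ i * Cont (useq u 2 i.*2.+1) * phi2_right m u i w.
  by rewrite Phi2E mulr_sumr -big_split; apply: eq_bigr => i _ /=; ring.
rewrite -subn1 -/(even_part w) /main_part /tadd /Phi1 /phi1 /tscale Phi2_sum half_double -natrB //.
by ring.
Qed.

Lemma piPi_even_part w : piPi m even_part w = 0.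
Proof.
rewrite piPi_sum big1_seq // => j /andP[_]; rewrite mem_index_iota => /andP[_ lt_j].
have le4m : (4 <= m)%N by lia.
case: (ltnP j l) => [lt_jl|le_lj].
  case: (ltnP j h) => [lt_jh|le_hj].
    by apply: piPi_first_omega => //; apply: rot_term_first_omega_head; lia.
  rewrite (_ : (j.*2.+2 = m + (j - h).*2.+2)%N); last by lia.
  by apply: piPi_first_omega => //; apply: (@rot_term_first_omega_tail _ _ _ h); lia.
rewrite (_ : (j.*2.+2 = m + (j - h).*2.+2)%N); last by lia.
by apply: piPi_last_omega => //; apply: (@rot_term_last_omega _ _ _ h); lia.
Qed.

End Expansion.

End Contractions.

Theorem lemma5p4 (K : fieldType) (hK : [pchar K] =i pred0) (g : nat)
  (m l : nat) (hm4 : (4 <= m)%N) (hmeven : ~~ odd m) (hl : (m./2 <= l)%N)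
  (u : nat -> Vec K g) :
  lhs54 m l u = rhs54 m l u.
Proof.
have [h def_m] : exists h, m = h.*2.
  by exists m./2; rewrite -{1}(odd_double_half m) (negbTE hmeven).
subst m; rewrite half_double in hl.
have le2h : (2 <= h)%N by lia.
rewrite /lhs54 (piPi_ext (contract_cyc_split u le2h hl)) /rhs54 -/(main_part h l u).
apply: functional_extensionality => w.
by rewrite piPiD (piPi_even_part hK u le2h hl) addr0.
Qed.
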